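(* Suppose $x\in[1,2]^6$. Then $\frac{\partial\phi}{\partial x_j}(x)\ge0$ for each $j\in\{2,3,5,6\}$. In particular, for all $k_j\in[x_j,2]$, $j\in\{2,3,5,6\}$, $$\phi(x_1,x_2,x_3,x_4,x_5,x_6)\le\phi(x_1,k_2,k_3,x_4,k_5,k_6).$$
   Context: For $x=(x_1,\dots,x_6)\in\mathbb{R}^6_{\ge1}$ define $$\phi(x)=\frac{x_2x_3+x_5x_6+x_1x_2x_5+x_1x_3x_6-x_1^2x_4+x_4}{\sqrt{2x_1x_2x_6+x_1^2+x_2^2+x_6^2-1}\sqrt{2x_1x_3x_5+x_1^2+x_3^2+x_5^2-1}}.$$ *)

From Stdlib Require Import Reals.
From Coquelicot Require Import Coquelicot.
Open Scope R_scope.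

Definition phi (x1 x2 x3 x4 x5 x6 : R) : R :=
  (x2*x3 + x5*x6 + x1*x2*x5 + x1*x3*x6 - x1^2*x4 + x4) /
  (sqrt (2*x1*x2*x6 + x1^2 + x2^2 + x6^2 - 1) *
   sqrt (2*x1*x3*x5 + x1^2 + x3^2 + x5^2 - 1)).

Definition in12 (t : R) : Prop := 1 <= t <= 2.

(* On the box, the numerator of d(phi)/dx2 factors as (x1^2 - 1) times
   x3 (1 - x6^2) + x5 (x1 + x2 x6) + x4 (x1 x6 + x2), and the second factor is
   at least 2 (1 + x6) (2 - x6) >= 0.  The partials in x3, x5, x6 reduce to this
   one through the symmetries (x2 x3)(x5 x6) and (x2 x6)(x3 x5) of phi, and the
   monotonicity follows coordinate by coordinate from the mean value theorem. *)

From Stdlib Require Import Reals Lra Psatz.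
From Coquelicot Require Import Coquelicot.
Open Scope R_scope.

Definition has_nonneg_derive (f : R -> R) (x : R) : Prop :=
  ex_derive f x /\ 0 <= Derive f x.

Lemma has_nonneg_derive_of_is_derive (f : R -> R) (x d : R) :
  is_derive f x d -> 0 <= d -> has_nonneg_derive f x.
Proof.
intros D Hd; split.
- now exists d.
- now rewrite (is_derive_unique f x d D).
Qed.

Lemma has_nonneg_derive_ext (f g : R -> R) (x : R) :
  (forall t, f t = g t) -> has_nonneg_derive f x -> has_nonneg_derive g x.
Proof.
intros Efg [Hex Hpos]; split.
- exact (ex_derive_ext f g x Efg Hex).
- now rewrite <- (Derive_ext f g x Efg).
Qed.

Lemma has_nonneg_derive_le (g : R -> R) (a b : R) :
  a <= b -> (forall t, a <= t <= b -> has_nonneg_derive g t) -> g a <= g b.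
Proof.
intros Hab Hg.
destruct (Req_dec a b) as [<- | Hne]; [lra |].
destruct (MVT_cor3 g (Derive g) a b) as (c & Hac & Hcb & ->); [lra | |].
- intros t Hat Htb.
  apply is_derive_Reals, Derive_correct, Hg; lra.
- assert (0 <= Derive g c) by (apply Hg; lra).
  nra.
Qed.

Definition gram (a b c : R) : R := 2*a*b*c + a^2 + b^2 + c^2 - 1.

Lemma gram_pos (a b c : R) : 1 <= a -> 1 <= b -> 1 <= c -> 0 < gram a b c.
Proof.
unfold gram; intros Ha Hb Hc.
assert (1 <= a*b) by nra.
assert (1 <= a*b*c) by nra.
nra.
Qed.

Lemma phi_swap_x2x3 (x1 a b x4 c d : R) : phi x1 a b x4 c d = phi x1 b a x4 d c.
Proof. unfold phi; rewrite (Rmult_comm (sqrt _)); repeat (f_equal; try ring). Qed.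

Lemma phi_swap_x2x6 (x1 a b x4 c d : R) : phi x1 a b x4 c d = phi x1 d c x4 b a.
Proof. unfold phi; repeat (f_equal; try ring). Qed.

Lemma phi_x2_numerator_factor (x1 x2 x3 x4 x5 x6 : R) :
  (x3 + x1*x5) * gram x1 x2 x6
  - (x2*x3 + x5*x6 + x1*x2*x5 + x1*x3*x6 - x1^2*x4 + x4) * (x1*x6 + x2)
  = (x1^2 - 1) * (x3*(1 - x6^2) + x5*(x1 + x2*x6) + x4*(x1*x6 + x2)).
Proof. unfold gram; ring. Qed.

Lemma phi_x2_cofactor_nonneg (x1 x2 x3 x4 x5 x6 : R) :
  1 <= x1 -> 1 <= x2 -> x3 <= 2 -> 1 <= x4 -> 1 <= x5 -> 1 <= x6 <= 2 ->
  0 <= x3*(1 - x6^2) + x5*(x1 + x2*x6) + x4*(x1*x6 + x2).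
Proof.
intros H1 H2 H3 H4 H5 H6.
replace (x3*(1 - x6^2) + x5*(x1 + x2*x6) + x4*(x1*x6 + x2))
  with ((2 - x3)*(x6^2 - 1) + (x5 - 1)*(x1 + x2*x6) + (x4 - 1)*(x1*x6 + x2)
        + (x1 + x2 - 2)*(1 + x6) + 2*(1 + x6)*(2 - x6)) by ring.
assert (0 <= (2 - x3)*(x6^2 - 1)) by (apply Rmult_le_pos; nra).
assert (0 <= (x5 - 1)*(x1 + x2*x6)) by (apply Rmult_le_pos; nra).
assert (0 <= (x4 - 1)*(x1*x6 + x2)) by (apply Rmult_le_pos; nra).
assert (0 <= (x1 + x2 - 2)*(1 + x6)) by (apply Rmult_le_pos; nra).
assert (0 <= 2*(1 + x6)*(2 - x6)) by (apply Rmult_le_pos; nra).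
lra.
Qed.

Lemma is_derive_phi_x2 (x1 x2 x3 x4 x5 x6 : R) :
  0 < gram x1 x2 x6 -> 0 < gram x1 x3 x5 ->
  is_derive (fun t => phi x1 t x3 x4 x5 x6) x2
    ((x1^2 - 1) * (x3*(1 - x6^2) + x5*(x1 + x2*x6) + x4*(x1*x6 + x2)) /
     (gram x1 x2 x6 * sqrt (gram x1 x2 x6) * sqrt (gram x1 x3 x5))).
Proof.
intros HA HB; rewrite <- phi_x2_numerator_factor.
unfold gram, phi in *.
assert (EA : 2*x1*x2*x6 + x1*(x1*1) + x2*(x2*1) + x6*(x6*1) + - (1)
             = 2*x1*x2*x6 + x1^2 + x2^2 + x6^2 - 1) by ring.
assert (EB : 2*x1*x3*x5 + x1*(x1*1) + x3*(x3*1) + x5*(x5*1) - 1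
             = 2*x1*x3*x5 + x1^2 + x3^2 + x5^2 - 1) by ring.
assert (PA := sqrt_lt_R0 _ HA); assert (PB := sqrt_lt_R0 _ HB).
assert (SA := sqrt_sqrt _ (Rlt_le _ _ HA)).
auto_derive; rewrite ?EA, ?EB.
- repeat split; auto.
  apply Rgt_not_eq, Rmult_lt_0_compat; auto.
- set (sA := sqrt (2*x1*x2*x6 + x1^2 + x2^2 + x6^2 - 1)) in *.
  set (sB := sqrt (2*x1*x3*x5 + x1^2 + x3^2 + x5^2 - 1)) in *.
  clearbody sA sB.
  (* expressing the radicand as sA * sA makes the identity rational in sA *)
  rewrite <- SA; field; lra.
Qed.

Lemma phi_x2_has_nonneg_derive (x1 x2 x3 x4 x5 x6 : R) :
  in12 x1 -> in12 x2 -> in12 x3 -> in12 x4 -> in12 x5 -> in12 x6 ->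
  has_nonneg_derive (fun t => phi x1 t x3 x4 x5 x6) x2.
Proof.
unfold in12; intros H1 H2 H3 H4 H5 H6.
assert (HA : 0 < gram x1 x2 x6) by (apply gram_pos; lra).
assert (HB : 0 < gram x1 x3 x5) by (apply gram_pos; lra).
assert (D := is_derive_phi_x2 x1 x2 x3 x4 x5 x6 HA HB).
apply (has_nonneg_derive_of_is_derive _ _ _ D).
assert (Qpos := phi_x2_cofactor_nonneg x1 x2 x3 x4 x5 x6
                 (proj1 H1) (proj1 H2) (proj2 H3) (proj1 H4) (proj1 H5) H6).
apply Rdiv_le_0_compat.
- apply Rmult_le_pos; nra.
- apply Rmult_lt_0_compat; [apply Rmult_lt_0_compat |]; auto using sqrt_lt_R0.
Qed.

Lemma phi_x3_has_nonneg_derive (x1 x2 x3 x4 x5 x6 : R) :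
  in12 x1 -> in12 x2 -> in12 x3 -> in12 x4 -> in12 x5 -> in12 x6 ->
  has_nonneg_derive (fun t => phi x1 x2 t x4 x5 x6) x3.
Proof.
intros; apply (has_nonneg_derive_ext (fun t => phi x1 t x2 x4 x6 x5)).
- intros t; apply phi_swap_x2x3.
- now apply phi_x2_has_nonneg_derive.
Qed.

Lemma phi_x6_has_nonneg_derive (x1 x2 x3 x4 x5 x6 : R) :
  in12 x1 -> in12 x2 -> in12 x3 -> in12 x4 -> in12 x5 -> in12 x6 ->
  has_nonneg_derive (fun t => phi x1 x2 x3 x4 x5 t) x6.
Proof.
intros; apply (has_nonneg_derive_ext (fun t => phi x1 t x5 x4 x3 x2)).
- intros t; apply phi_swap_x2x6.
- now apply phi_x2_has_nonneg_derive.
Qed.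

Lemma phi_x5_has_nonneg_derive (x1 x2 x3 x4 x5 x6 : R) :
  in12 x1 -> in12 x2 -> in12 x3 -> in12 x4 -> in12 x5 -> in12 x6 ->
  has_nonneg_derive (fun t => phi x1 x2 x3 x4 t x6) x5.
Proof.
intros; apply (has_nonneg_derive_ext (fun t => phi x1 x6 t x4 x3 x2)).
- intros t; apply phi_swap_x2x6.
- now apply phi_x3_has_nonneg_derive.
Qed.

Theorem lemma3p4 (x1 x2 x3 x4 x5 x6 : R) :
  in12 x1 -> in12 x2 -> in12 x3 -> in12 x4 -> in12 x5 -> in12 x6 ->
  (* partial derivatives in x2, x3, x5, x6 exist and are nonnegative *)
  (ex_derive (fun t => phi x1 t x3 x4 x5 x6) x2 /\
     0 <= Derive (fun t => phi x1 t x3 x4 x5 x6) x2) /\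
  (ex_derive (fun t => phi x1 x2 t x4 x5 x6) x3 /\
     0 <= Derive (fun t => phi x1 x2 t x4 x5 x6) x3) /\
  (ex_derive (fun t => phi x1 x2 x3 x4 t x6) x5 /\
     0 <= Derive (fun t => phi x1 x2 x3 x4 t x6) x5) /\
  (ex_derive (fun t => phi x1 x2 x3 x4 x5 t) x6 /\
     0 <= Derive (fun t => phi x1 x2 x3 x4 x5 t) x6) /\
  (* consequence: monotonicity *)
  (forall k2 k3 k5 k6 : R,
     x2 <= k2 <= 2 -> x3 <= k3 <= 2 -> x5 <= k5 <= 2 -> x6 <= k6 <= 2 ->
     phi x1 x2 x3 x4 x5 x6 <= phi x1 k2 k3 x4 k5 k6).
Proof.
intros H1 H2 H3 H4 H5 H6.
refine (conj (phi_x2_has_nonneg_derive _ _ _ _ _ _ H1 H2 H3 H4 H5 H6)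
       (conj (phi_x3_has_nonneg_derive _ _ _ _ _ _ H1 H2 H3 H4 H5 H6)
       (conj (phi_x5_has_nonneg_derive _ _ _ _ _ _ H1 H2 H3 H4 H5 H6)
       (conj (phi_x6_has_nonneg_derive _ _ _ _ _ _ H1 H2 H3 H4 H5 H6) _)))).
intros k2 k3 k5 k6 K2 K3 K5 K6.
unfold in12 in *.
apply Rle_trans with (phi x1 k2 x3 x4 x5 x6).
{ apply (has_nonneg_derive_le (fun t => phi x1 t x3 x4 x5 x6)); [lra |].
  intros t Ht; apply phi_x2_has_nonneg_derive; unfold in12; lra. }
apply Rle_trans with (phi x1 k2 k3 x4 x5 x6).
{ apply (has_nonneg_derive_le (fun t => phi x1 k2 t x4 x5 x6)); [lra |].
  intros t Ht; apply phi_x3_has_nonneg_derive; unfold in12; lra. }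
apply Rle_trans with (phi x1 k2 k3 x4 k5 x6).
{ apply (has_nonneg_derive_le (fun t => phi x1 k2 k3 x4 t x6)); [lra |].
  intros t Ht; apply phi_x5_has_nonneg_derive; unfold in12; lra. }
apply (has_nonneg_derive_le (fun t => phi x1 k2 k3 x4 k5 t)); [lra |].
intros t Ht; apply phi_x6_has_nonneg_derive; unfold in12; lra.
Qed.
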